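(* Let $p\ge7$ be prime, $F$ a number field with $\mathbb{Q}(p)\subseteq F$, and $c_p\in G_{\mathbb{Q}}$ an element acting nontrivially on $\mathbb{Q}(p)$. Let $\overline\rho:G_F\to\mathrm{PGL}_2(\mathbb{F}_p)$ be a continuous homomorphism with cyclotomic determinant (so $\overline\rho$ takes values in $\mathrm{PSL}_2(\mathbb{F}_p)$). Then $X_{\overline\rho}(p)$ is defined over $\mathbb{Q}$ if and only if there exist $g\in\mathrm{PGL}_2(\mathbb{F}_p)\setminus\mathrm{PSL}_2(\mathbb{F}_p)$ and a homomorphism $\overline r:G_{\mathbb{Q}(p)}\to\mathrm{PSL}_2(\mathbb{F}_p)$ with $\overline r|_{G_F}=\overline\rho$, such that $\overline r(c_p^2)=g^2$ and $\overline r(c_p^{-1}\sigma c_p)=g^{-1}\overline r(\sigma)g$ for all $\sigma\in G_{\mathbb{Q}(p)}$.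
   Context: $G_K=\mathrm{Gal}(\overline{\mathbb{Q}}/K)$. $\mathbb{Q}(p)$ is the unique quadratic subfield of $\mathbb{Q}(\zeta_p)$. $\overline\varepsilon_p^{\mathrm{pr}}$ is the mod-$p$ cyclotomic character composed with $\mathbb{F}_p^\times\to\mathbb{F}_p^\times/\mathbb{F}_p^{\times2}$; determinants on $\mathrm{PGL}_2(\mathbb{F}_p)$ take values in $\mathbb{F}_p^\times/\mathbb{F}_p^{\times2}$ and $\mathrm{PSL}_2(\mathbb{F}_p)$ is the kernel; ''cyclotomic determinant'' means $\det\overline\rho=\overline\varepsilon_p^{\mathrm{pr}}$ on $G_F$. $\overline\rho^\vee(\sigma)=\overline\rho(\sigma^{-1})^t$. Fix a non-residue $v\in\mathbb{F}_p^\times$, $V=\begin{pmatrix}0&v\\-1&0\end{pmatrix}$, and let $X(p)$ be the model over $\mathbb{Q}$ of the principal modular curve of level $p$ given by the subgroup $\mathbb{F}_p^\times I\cup\mathbb{F}_p^\times V\subseteq\mathrm{GL}_2(\mathbb{F}_p)$; $\mathrm{Aut}_{\overline{\mathbb{Q}}}X(p)\cong\mathrm{PSL}_2(\mathbb{F}_p)$ with $G_{\mathbb{Q}}$ acting by $\sigma\cdot x=\eta(\sigma)x\eta(\sigma)^{-1}$, where $\eta(\sigma)=1$ if $\sigma$ fixes $\mathbb{Q}(p)$ and $\eta(\sigma)=V$ otherwise. $\xi(\sigma)=\overline\rho^\vee(\sigma)\eta(\sigma)$ is a $1$-cocycle $G_F\to\mathrm{PSL}_2(\mathbb{F}_p)$,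 $X_{\overline\rho}(p)$ is the corresponding twist of $X(p)$ over $F$, and it is ''defined over $\mathbb{Q}$'' if $[\xi]$ lies in the image of restriction $H^1(G_{\mathbb{Q}},\mathrm{PSL}_2(\mathbb{F}_p))\to H^1(G_F,\mathrm{PSL}_2(\mathbb{F}_p))$. *)

(* Q-bar is modelled by MathComp's algC (the algebraic
   numbers), so G_Q = ring automorphisms of algC, viewed as functions. *)
From HB Require Import structures.
From mathcomp Require Import all_boot all_order all_algebra all_fingroup all_field.
From Stdlib Require Import ClassicalDescription.
Set Implicit Arguments. Unset Strict Implicit. Unset Printing Implicit Defensive.
Import GRing.Theory Num.Theory.
Local Open Scope ring_scope.

(* sigma is an element of G_Q = Aut(Qbar) (ring automorphisms automatically fix Q) *)
Definition isAut (s : algC -> algC) : Prop :=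
  [/\ (forall x y, s (x + y) = s x + s y),
      (forall x y, s (x * y) = s x * s y),
      s 1 = 1 & bijective s].

Definition GalK (K : algC -> Prop) (s : algC -> algC) : Prop :=
  isAut s /\ forall x, K x -> s x = x.

Definition GQ (s : algC -> algC) : Prop := isAut s.

Definition number_field (K : algC -> Prop) : Prop :=
  [/\ K 0 /\ K 1,
      (forall x y, K x -> K y -> K (x - y)),
      (forall x y, K x -> K y -> K (x * y)),
      (forall x, K x -> K (x^-1))
    & exists (n : nat) (b : 'I_n -> algC),
        forall x, K x -> exists a : 'I_n -> rat, x = \sum_(i < n) ratr (a i) * b i].

(* pstar = (-1)^((p-1)/2) p ;  Q(p) = Q(sqrt pstar), the quadratic subfield of Q(zeta_p) *)
Definition pstar (p : nat) : algC := (-1) ^+ (p.-1 %/ 2) * p%:R.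
Definition Qp (p : nat) (x : algC) : Prop :=
  exists a b : rat, x = ratr a + ratr b * sqrtC (pstar p).

(* continuity for the Krull topology, target discrete: f is locally constant,
   basic neighbourhoods of sigma being {tau | tau = sigma on a finite set t} *)
Definition krull_continuous (T : Type) (G : (algC -> algC) -> Prop)
  (f : (algC -> algC) -> T) : Prop :=
  forall s, G s -> exists t : seq algC,
    forall u, G u -> (forall x, x \in t -> u x = s x) -> f u = f s.

Definition hom_on (gT : finGroupType) (G : (algC -> algC) -> Prop)
  (f : (algC -> algC) -> gT) : Prop :=
  forall s u, G s -> G u -> f (s \o u) = (f s * f u)%g.

Definition is_square (p : nat) (y : 'F_p) : bool := [exists u : 'F_p, y == u ^+ 2].

Definition scalarsGL (p : nat) : {set {'GL_2['F_p]}} :=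
  [set A : {'GL_2['F_p]} | is_scalar_mx (GLval A)].

Definition PGL2 (p : nat) : finGroupType := coset_of (scalarsGL p).

(* det : PGL_2 -> F_p^x / F_p^x2 is identified with the bit "det is a square";
   PSL_2(F_p) is its kernel *)
Definition det_sq (p : nat) (x : PGL2 p) : bool :=
  is_square (\det (GLval (repr x))).
Definition PSL2 (p : nat) : {set PGL2 p} := [set x : PGL2 p | det_sq x].

Definition GLtr (p : nat) (A : {'GL_2['F_p]}) : {'GL_2['F_p]} :=
  insubd (1%g : {'GL_2['F_p]}) (GLval A)^T.

(* rho^vee(sigma) = rho(sigma^{-1})^t = (rho(sigma)^{-1})^t for a homomorphism rho *)
Definition dual (p : nat) (rho : (algC -> algC) -> PGL2 p) (s : algC -> algC) : PGL2 p :=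
  coset (scalarsGL p) (GLtr ((repr (rho s))^-1)%g).

Definition Vmx (p : nat) (v : 'F_p) : 'M['F_p]_2 :=
  \matrix_(i < 2, j < 2) (if (i == 0) && (j == 1) then v
                          else if (i == 1) && (j == 0) then -1 else 0).
Definition VGL (p : nat) (v : 'F_p) : {'GL_2['F_p]} := insubd (1%g : {'GL_2['F_p]}) (Vmx v).

Definition eta (p : nat) (v : 'F_p) (s : algC -> algC) : PGL2 p :=
  if excluded_middle_informative (forall x, Qp p x -> s x = x) then 1%g else coset (scalarsGL p) (VGL v).

Definition act (p : nat) (v : 'F_p) (s : algC -> algC) (x : PGL2 p) : PGL2 p :=
  (eta v s * x * (eta v s)^-1)%g.

Definition cocycle (p : nat) (v : 'F_p) (G : (algC -> algC) -> Prop)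
  (z : (algC -> algC) -> PGL2 p) : Prop :=
  [/\ forall s, G s -> z s \in PSL2 p,
      forall s u, G s -> G u -> z (s \o u) = (z s * act v s (z u))%g
    & krull_continuous G z].

(* [xi] in the image of H^1(G_Q, PSL_2) -> H^1(G_F, PSL_2) *)
Definition in_res_image (p : nat) (v : 'F_p) (F : algC -> Prop)
  (xi : (algC -> algC) -> PGL2 p) : Prop :=
  exists z, cocycle v GQ z /\
    exists2 b, b \in PSL2 p &
      forall s, GalK F s -> xi s = ((b^-1) * z s * act v s b)%g.

Definition twist_defined_over_Q (p : nat) (v : 'F_p) (F : algC -> Prop)
  (rho : (algC -> algC) -> PGL2 p) : Prop :=
  in_res_image v F (fun s => (dual rho s * eta v s)%g).

From Pilot Require Import Defs.
From HB Require Import structures.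
From mathcomp Require Import all_boot all_order all_algebra all_fingroup all_solvable all_field.
From Stdlib Require Import ClassicalDescription FunctionalExtensionality.
Set Implicit Arguments. Unset Strict Implicit. Unset Printing Implicit Defensive.
Import GRing.Theory Num.Theory.
Local Open Scope ring_scope.

(* A continuous cocycle [z] on [G_Q] for the action through [eta] is the same as the
   continuous homomorphism [s |-> z s * eta s] into [PGL_2], and on [G_F], which fixes
   [Q(p)], the twisting cocycle of [X_rho(p)] is [rho^vee] itself. So [X_rho(p)] is
   defined over [Q] iff [rho^vee] extends to a continuous homomorphism [U] of [G_Q]
   mapping [G_Q(p)] into [PSL_2] and [c_p] outside it. As [G_Q(p)] has index two, such
   [U] amount to the restriction [R] to [G_Q(p)] together with [h = U(c_p)], subject to
   [R(c_p^2) = h^2] and [R(c_p^-1 s c_p) = h^-1 R(s) h]; these conditions are exactly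
   what makes [s |-> h R(c_p^-1 s)] on the other coset define a homomorphism. The
   transpose-inverse automorphism of [PGL_2] exchanges [rho^vee] and [rho], and
   continuity comes from that of [rho] because [G_F] is open. *)

Section FiniteFieldSquares.
Variable R : finFieldType.
Hypothesis oddR : odd #|R|.
Local Notation square y := [exists u : R, y == u ^+ 2].

Lemma squareP (y : R) : reflect (exists u, y = u ^+ 2) (square y).
Proof. by apply: (iffP existsP) => [[u /eqP]|[u ->]]; exists u. Qed.

Lemma square_scale (a y : R) : a != 0 -> square (a ^+ 2 * y) = square y.
Proof.
move=> a0; apply/squareP/squareP => [[u Hu]|[u ->]]; last by exists (a * u); rewrite exprMn.
by exists (u / a); rewrite expr_div_n -Hu [_ * y]mulrC mulfK // expf_neq0.
Qed.

Lemma squareV (y : R) : square y^-1 = square y.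
Proof.
have [->|y0] := eqVneq y 0; first by rewrite invr0.
by rewrite -(square_scale _ (invr_neq0 y0)) expr2 -mulrA mulVf ?mulr1.
Qed.

Lemma square_generator_exp (w : {unit R}) k :
  <[w]>%g = [set: {unit R}] -> square (val w ^+ k) = ~~ odd k.
Proof.
move=> gen_w; apply/squareP/idP => [[u wk_u]|]; last first.
  by rewrite -dvdn2 => /dvdnP[j ->]; exists (val w ^+ j); rewrite -exprM mulnC.
have u0 : u != 0.
  apply: contra_eqN wk_u => /eqP->; rewrite expr0n expf_neq0 //.
  by rewrite -unitfE (valP w).
have /cycleP[j uj] : FinRing.unit R (etrans (unitfE u) u0) \in <[w]>%g.
  by rewrite gen_w inE.
have : (w ^+ k == w ^+ (j * 2))%g.
  by apply/eqP/val_inj; rewrite expgM -uj /= !FinRing.val_unitX wk_u expr2.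
rewrite eq_expg_mod_order /order gen_w card_finField_unit => /eqP k_2j.
have even_q1 : (2 %| #|R|.-1)%N by rewrite -subn1 dvdn2 oddB ?oddR // ltnW // finNzRing_gt1.
have := congr1 (fun m => m %% 2)%N k_2j.
by rewrite !modn_dvdm // !modn2 oddM andbF; case: (odd k).
Qed.

Lemma squareM (x y : R) : x != 0 -> y != 0 -> square (x * y) = (square x == square y).
Proof.
have /cyclicP[w gen_w] := field_unit_group_cyclic [set: {unit R}]%G.
have powE z : z != 0 -> exists k, z = val w ^+ k.
  move=> z0; have /cycleP[k zk] : FinRing.unit R (etrans (unitfE z) z0) \in <[w]>%g.
    by rewrite -gen_w inE.
  by exists k; rewrite -FinRing.val_unitX -zk.
move=> /powE[k ->] /powE[l ->].
by rewrite -exprD !square_generator_exp // oddD; case: (odd k); case: (odd l).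
Qed.

End FiniteFieldSquares.

Section ProjectiveLinearGroup.
Variable p : nat.
Local Notation GL := {'GL_2['F_p]}.
Local Notation S := (scalarsGL p).

Lemma scalarsGL_group_set : group_set S.
Proof.
apply/group_setP; split=> [|A B]; first by rewrite inE GL_1E scalar_mx_is_scalar.
rewrite !inE GL_MxE => /is_scalar_mxP[a ->] /is_scalar_mxP[b ->].
by rewrite -scalar_mxM scalar_mx_is_scalar.
Qed.
Canonical scalarsGL_group := Group scalarsGL_group_set.

Lemma scalarsGL_norm (A : GL) : A \in 'N(S)%g.
Proof.
apply: (subsetP (cent_sub S)); apply/centP => B; rewrite inE => /is_scalar_mxP[b Bb].
apply: val_inj; change (GLval (A * B)%g = GLval (B * A)%g).
by rewrite !GL_MxE Bb scalar_mxC.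
Qed.

Lemma coset_scalarsM (A B : GL) : coset S (A * B) = (coset S A * coset S B)%g.
Proof. by rewrite coset_morphM ?scalarsGL_norm. Qed.

Lemma coset_scalarsP (A B : GL) : coset S A = coset S B <-> (A * B^-1)%g \in S.
Proof.
split=> [AB|/coset_id AB_1]; last by rewrite -(mulgKV B A) coset_scalarsM AB_1 mul1g.
apply: coset_idr; first exact: scalarsGL_norm.
by rewrite coset_scalarsM AB -coset_scalarsM mulgV coset_id.
Qed.

Lemma repr_coset_scalars (A : GL) :
  exists2 a, a != 0 & GLval (repr (coset S A)) = a%:M *m GLval A.
Proof.
have /coset_scalarsP : coset S (repr (coset S A)) = coset S A by rewrite coset_reprK.
rewrite inE => /is_scalar_mxP[a Ea]; exists a.
  apply: contraTneq (GL_det (repr (coset S A) * A^-1)%g) => a0.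
  by rewrite Ea a0 det_scalar expr0n eqxx.
by rewrite -Ea -GL_MxE mulgKV.
Qed.

Lemma in_PSL2 (x : PGL2 p) : (x \in PSL2 p) = det_sq x.
Proof. by rewrite inE. Qed.

Lemma det_sq_coset (A : GL) : det_sq (coset S A) = is_square (\det (GLval A)).
Proof.
have [a a0 reprE] := repr_coset_scalars A.
by rewrite /det_sq reprE detM det_scalar /is_square square_scale.
Qed.

End ProjectiveLinearGroup.

Section DetSquareClass.
Variable p : nat.
Hypotheses (p_pr : prime p) (p_odd : odd p).
Let oddFp : odd #|'F_p|. Proof. by rewrite card_Fp. Qed.

Lemma det_sqM (x y : PGL2 p) : det_sq (x * y)%g = (det_sq x == det_sq y).
Proof.
rewrite -(coset_reprK x) -(coset_reprK y) -coset_scalarsM !det_sq_coset GL_MxE detM.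
by rewrite /is_square squareM ?GL_det.
Qed.

Lemma det_sq1 : det_sq (1 : PGL2 p).
Proof.
rewrite -(coset_id (group1 (scalarsGL_group p))) det_sq_coset GL_1E det1.
by apply/existsP; exists 1; rewrite expr1n.
Qed.

Lemma det_sqV (x : PGL2 p) : det_sq (x^-1)%g = det_sq x.
Proof.
by have := det_sqM x^-1 x; rewrite mulVg det_sq1; case: (det_sq x); case: (det_sq _).
Qed.

Lemma det_sqJ (b x : PGL2 p) : det_sq (b^-1 * x * b)%g = det_sq x.
Proof. by rewrite !det_sqM det_sqV; case: (det_sq x); case: (det_sq b). Qed.

End DetSquareClass.

Lemma det_Vmx p (v : 'F_p) : \det (Vmx v) = v.
Proof.
rewrite (expand_det_row _ ord0) big_ord_recl big_ord1 /cofactor !det_mx11 !mxE /=.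
by rewrite mul0r add0r /bump /= expr1 mulN1r opprK mulr1.
Qed.

Lemma Vmx_sqr p (v : 'F_p) : Vmx v *m Vmx v = (- v)%:M.
Proof.
apply/matrixP=> i j; rewrite !mxE big_ord_recl big_ord1 !mxE.
case: i => [[|[|?]] ?] //; case: j => [[|[|?]] ?] //=;
  by rewrite ?mul0r ?mulr0 ?add0r ?addr0 ?mulrN1 ?mulN1r ?mulr1n ?mulr0n ?oppr0.
Qed.

Section MatrixV.
Variables (p : nat) (v : 'F_p).
Hypothesis v_neq0 : v != 0.
Local Notation Vbar := (coset (scalarsGL p) (VGL v)).

Lemma VGLE : GLval (VGL v) = Vmx v.
Proof. by rewrite /VGL insubdK // unfold_in unitmxE det_Vmx unitfE. Qed.

Lemma Vbar_sqr : (Vbar * Vbar)%g = 1%g.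
Proof.
rewrite -coset_scalarsM coset_id // inE GL_MxE VGLE Vmx_sqr.
exact: scalar_mx_is_scalar.
Qed.

Lemma det_sq_Vbar : det_sq Vbar = is_square v.
Proof. by rewrite det_sq_coset VGLE det_Vmx. Qed.

End MatrixV.

Section Duality.
Variable p : nat.
Local Notation GL := {'GL_2['F_p]}.
Local Notation S := (scalarsGL p).

Lemma GLtrE (A : GL) : GLval (GLtr A) = (GLval A)^T.
Proof. by rewrite /GLtr insubdK // unfold_in unitmx_tr GL_unitmx. Qed.

Definition GLdual (A : GL) : GL := GLtr A^-1.

Lemma GLdualE (A : GL) : GLval (GLdual A) = (invmx (GLval A))^T.
Proof. by rewrite GLtrE GL_VxE. Qed.

Lemma GLdualM (A B : GL) : GLdual (A * B) = (GLdual A * GLdual B)%g.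
Proof.
apply: val_inj; change (GLval (GLdual (A * B)) = GLval (GLdual A * GLdual B)%g).
by rewrite GL_MxE !GLtrE invMg GL_MxE trmx_mul.
Qed.

Lemma GLdualV (A : GL) : GLdual A^-1 = (GLdual A)^-1%g.
Proof.
apply: val_inj; change (GLval (GLdual A^-1) = GLval (GLdual A)^-1%g).
by rewrite [RHS]GL_VxE !GLdualE GL_VxE trmx_inv.
Qed.

Lemma GLdualK : involutive GLdual.
Proof.
move=> A; apply: val_inj; change (GLval (GLdual (GLdual A)) = GLval A).
by rewrite !GLdualE -trmx_inv trmxK invmxK.
Qed.

Lemma GLdual_scalar (A : GL) : A \in S -> GLdual A \in S.
Proof.
rewrite !inE GLdualE => /is_scalar_mxP[a ->].
by rewrite invmx_scalar tr_scalar_mx scalar_mx_is_scalar.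
Qed.

Lemma det_GLdual (A : GL) : \det (GLval (GLdual A)) = (\det (GLval A))^-1.
Proof. by rewrite GLdualE det_tr det_inv. Qed.

Definition PGLdual (x : PGL2 p) : PGL2 p := coset S (GLdual (repr x)).

Lemma dualE (rho : (algC -> algC) -> PGL2 p) s : dual rho s = PGLdual (rho s).
Proof. by []. Qed.

Lemma PGLdual_coset (A : GL) : PGLdual (coset S A) = coset S (GLdual A).
Proof.
apply/coset_scalarsP; rewrite -GLdualV -GLdualM; apply: GLdual_scalar.
by apply/coset_scalarsP; rewrite coset_reprK.
Qed.

Lemma PGLdualM (x y : PGL2 p) : PGLdual (x * y) = (PGLdual x * PGLdual y)%g.
Proof.
rewrite -(coset_reprK x) -(coset_reprK y) -coset_scalarsM !PGLdual_coset.
by rewrite GLdualM coset_scalarsM.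
Qed.

Lemma PGLdualV (x : PGL2 p) : PGLdual x^-1 = (PGLdual x)^-1%g.
Proof.
have dual1 : PGLdual 1 = 1%g by apply: (mulgI (PGLdual 1)); rewrite -PGLdualM !mulg1.
by apply/esym/eqP; rewrite eq_invg_mul -PGLdualM mulgV dual1.
Qed.

Lemma PGLdualK : involutive PGLdual.
Proof. by move=> x; rewrite -(coset_reprK x) !PGLdual_coset GLdualK. Qed.

Lemma det_sq_PGLdual (x : PGL2 p) : det_sq (PGLdual x) = det_sq x.
Proof.
rewrite -(coset_reprK x) PGLdual_coset !det_sq_coset det_GLdual.
by rewrite /is_square squareV.
Qed.

End Duality.

Section Automorphism.
Variable s : algC -> algC.
Hypothesis s_aut : isAut s.

Lemma autD x y : s (x + y) = s x + s y. Proof. by case: s_aut. Qed.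
Lemma autM x y : s (x * y) = s x * s y. Proof. by case: s_aut. Qed.
Lemma aut1 : s 1 = 1. Proof. by case: s_aut. Qed.

Lemma aut0 : s 0 = 0.
Proof. by apply/(addrI (s 0)); rewrite -autD !addr0. Qed.

Lemma autN x : s (- x) = - s x.
Proof. by apply/(addIr (s x)); rewrite -autD !addNr aut0. Qed.

Lemma autX x n : s (x ^+ n) = s x ^+ n.
Proof. by elim: n => [|n IHn]; rewrite ?aut1 // !exprS autM IHn. Qed.

Lemma autV x : s x^-1 = (s x)^-1.
Proof.
have [->|x0] := eqVneq x 0; first by rewrite invr0 aut0 invr0.
have sx0 : s x != 0.
  by apply: contra_neq (oner_neq0 algC) => sx0; rewrite -aut1 -(mulfV x0) autM sx0 mul0r.
by apply/(mulfI sx0); rewrite -autM !mulfV // aut1.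
Qed.

Lemma aut_nat n : s n%:R = n%:R.
Proof. by elim: n => [|n IHn]; rewrite ?aut0 // -addn1 !natrD autD IHn aut1. Qed.

Lemma aut_ratr q : s (ratr q) = ratr q.
Proof.
have aut_int (m : int) : s m%:~R = m%:~R.
  by case: m => n; rewrite ?NegzE ?mulrNz ?autN /= aut_nat.
by rewrite /ratr autM autV !aut_int.
Qed.

Lemma aut_sum n (f : 'I_n -> algC) : s (\sum_(i < n) f i) = \sum_(i < n) s (f i).
Proof. exact: (big_morph s autD aut0). Qed.

End Automorphism.

Lemma isAut_comp s u : isAut s -> isAut u -> isAut (s \o u).
Proof.
move=> s_aut u_aut; split=> [x y|x y||] /=; rewrite ?autD ?autM ?aut1 //.
by apply: bij_comp; [case: s_aut | case: u_aut].
Qed.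

Lemma isAut_can s s' : isAut s -> cancel s s' -> cancel s' s -> isAut s'.
Proof.
move=> s_aut sK s'K; split=> [x y|x y||]; last by exists s.
- by apply: (can_inj sK); rewrite (autD s_aut) !s'K.
- by apply: (can_inj sK); rewrite (autM s_aut) !s'K.
- by apply: (can_inj sK); rewrite (aut1 s_aut) !s'K.
Qed.

Lemma number_field_open (F : algC -> Prop) : number_field F ->
  exists t : seq algC, forall w, isAut w -> {in t, w =1 id} -> GalK F w.
Proof.
case=> _ _ _ _ [n [b Fb]]; exists [seq b i | i <- enum 'I_n] => w w_aut w_t.
split=> // x /Fb[a ->]; rewrite (aut_sum w_aut); apply: eq_bigr => i _.
by rewrite (autM w_aut) (aut_ratr w_aut) w_t // map_f ?mem_enum.
Qed.

Section QuadraticSubfield.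
Variable p : nat.
Local Notation sqrt_ps := (sqrtC (pstar p)).

Definition fixes_Qp (s : algC -> algC) : bool := s sqrt_ps == sqrt_ps.

Lemma fixes_QpP s : isAut s -> reflect (forall x, Qp p x -> s x = x) (fixes_Qp s).
Proof.
move=> s_aut; apply: (iffP eqP) => [s_sqrt x [a [b ->]]|s_Qp].
  by rewrite (autD s_aut) (aut_ratr s_aut) (autM s_aut) (aut_ratr s_aut) s_sqrt.
by apply: s_Qp; exists 0, 1; rewrite rmorph0 rmorph1 add0r mul1r.
Qed.

Lemma GalQpP s : GalK (Qp p) s <-> isAut s /\ fixes_Qp s.
Proof. by split=> -[s_aut /(fixes_QpP s_aut) s_Qp]. Qed.

Hypothesis p_gt0 : (0 < p)%N.

Lemma sqrt_pstar_neq0 : sqrt_ps != 0.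
Proof. by rewrite sqrtC_eq0 mulf_neq0 ?signr_eq0 // pnatr_eq0 -lt0n. Qed.

Lemma aut_sqrt_pstar s : isAut s ->
  s sqrt_ps = if fixes_Qp s then sqrt_ps else - sqrt_ps.
Proof.
move=> s_aut; rewrite /fixes_Qp; case: eqP => // s_sqrt.
have : s sqrt_ps ^+ 2 == sqrt_ps ^+ 2.
  rewrite -(autX s_aut) sqrtCK /pstar (autM s_aut) (autX s_aut) (autN s_aut).
  by rewrite (aut1 s_aut) (aut_nat s_aut).
by rewrite eqf_sqr => /orP[/eqP|/eqP].
Qed.

Lemma fixes_QpM s u : isAut s -> isAut u ->
  fixes_Qp (s \o u) = (fixes_Qp s == fixes_Qp u).
Proof.
move=> s_aut u_aut; have sqrt_neqN : - sqrt_ps != sqrt_ps.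
  by rewrite eqNr sqrt_pstar_neq0.
rewrite {1}/fixes_Qp /= (aut_sqrt_pstar u_aut).
case: (fixes_Qp u); rewrite ?(autN s_aut) (aut_sqrt_pstar s_aut);
  case: (fixes_Qp s); rewrite ?opprK ?eqxx ?(negPf sqrt_neqN) // eq_sym.
Qed.

Lemma GalQp_comp s u : GalK (Qp p) s -> GalK (Qp p) u -> GalK (Qp p) (s \o u).
Proof.
move=> /GalQpP[s_aut s_Qp] /GalQpP[u_aut u_Qp]; apply/GalQpP.
by rewrite fixes_QpM // s_Qp u_Qp; split=> //; exact: isAut_comp.
Qed.

End QuadraticSubfield.

Section Eta.
Variables (p : nat) (v : 'F_p).
Local Notation Vbar := (coset (scalarsGL p) (VGL v)).

Lemma etaE s : isAut s -> Defs.eta v s = if fixes_Qp p s then 1%g else Vbar.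
Proof.
move=> s_aut; rewrite /Defs.eta.
case: excluded_middle_informative => /= [/(fixes_QpP _ s_aut) -> //|].
by case: (fixes_QpP _ s_aut).
Qed.

Lemma eta_continuous : krull_continuous GQ (Defs.eta v).
Proof.
move=> s s_aut; exists [:: sqrtC (pstar p)] => u u_aut /(_ _ (mem_head _ _)) us.
by rewrite (etaE u_aut) (etaE s_aut) /fixes_Qp us.
Qed.

Lemma eta_hom : (0 < p)%N -> v != 0 -> hom_on GQ (Defs.eta v).
Proof.
move=> p_gt0 v_neq0 s u s_aut u_aut.
rewrite (etaE (isAut_comp s_aut u_aut)) (etaE s_aut) (etaE u_aut) fixes_QpM //.
by case: (fixes_Qp p s); case: (fixes_Qp p u); rewrite ?mulg1 ?mul1g ?Vbar_sqr.
Qed.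

End Eta.

Section CocycleHom.
Variables (p : nat) (v : 'F_p) (G : (algC -> algC) -> Prop).
Hypothesis eta_homG : hom_on G (Defs.eta v).
Local Open Scope group_scope.

Lemma hom_of_cocycle (z : (algC -> algC) -> PGL2 p) :
  (forall s u, G s -> G u -> z (s \o u) = z s * Defs.act v s (z u)) ->
  hom_on G (fun s => z s * Defs.eta v s).
Proof. by move=> zC s u Gs Gu; rewrite zC // eta_homG // /Defs.act !mulgA mulgKV. Qed.

Lemma cocycle_of_hom (U : (algC -> algC) -> PGL2 p) : hom_on G U ->
  forall s u, G s -> G u -> U (s \o u) * (Defs.eta v (s \o u))^-1 =
    U s * (Defs.eta v s)^-1 * Defs.act v s (U u * (Defs.eta v u)^-1).
Proof.
by move=> UM s u Gs Gu; rewrite UM // eta_homG // /Defs.act invMg !mulgA mulgKV.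
Qed.

End CocycleHom.

Lemma krull_continuous_map (T T' : Type) (G : (algC -> algC) -> Prop)
    (f : (algC -> algC) -> T) (h : T -> T') :
  krull_continuous G f -> krull_continuous G (h \o f).
Proof. by move=> f_cont s Gs; have [t ft] := f_cont s Gs; exists t => u Gu /ft /= ->. Qed.

Lemma krull_continuousM (gT : finGroupType) (G : (algC -> algC) -> Prop)
    (f g : (algC -> algC) -> gT) :
  krull_continuous G f -> krull_continuous G g ->
  krull_continuous G (fun s => f s * g s)%g.
Proof.
move=> f_cont g_cont s Gs; have [t ft] := f_cont s Gs; have [t' gt'] := g_cont s Gs.
exists (t ++ t') => u Gu ut; rewrite ft ?gt' // => x xt; apply: ut.
  by rewrite mem_cat xt orbT.
by rewrite mem_cat xt.
Qed.

Lemma isAut_id : isAut id.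
Proof. by split=> //; exists id. Qed.

Lemma krull_continuous_open_subgroup (gT : finGroupType) (K F : algC -> Prop)
    (r : (algC -> algC) -> gT) :
  number_field F -> (forall x, K x -> F x) ->
  hom_on (GalK K) r -> krull_continuous (GalK F) r -> krull_continuous (GalK K) r.
Proof.
move=> /number_field_open[tF tF_open] KF rM r_cont a [a_aut aK].
have GFid : GalK F id by split; [exact: isAut_id | by []].
have [t0 t0_id] := r_cont id GFid.
have r_id : r id = 1%g.
  have GKid : GalK K id by split; [exact: isAut_id | by []].
  by apply: (mulgI (r id)); rewrite mulg1 -(rM id id GKid GKid).
exists (tF ++ t0) => w [w_aut wK] wa.
have [a' aK1 aK2] : bijective a by case: a_aut.
pose d := a' \o w.
have d_aut : isAut d by apply: isAut_comp => //; exact: isAut_can aK1 aK2.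
have GFd : GalK F d.
  by apply: tF_open => // x xtF; rewrite /d /= wa ?aK1 // mem_cat xtF.
have -> : w = a \o d by apply: functional_extensionality => x; rewrite /d /= aK2.
rewrite rM //; last by case: GFd => _ dF; split=> // x /KF /dF.
by rewrite (t0_id d GFd) ?r_id ?mulg1 // => x xt0; rewrite /d /= wa ?aK1 // mem_cat xt0 orbT.
Qed.

Section Extension.
Variables (p : nat) (gT : finGroupType) (c c' : algC -> algC).
Hypotheses (p_gt0 : (0 < p)%N) (c_aut : isAut c) (cK : cancel c c') (c'K : cancel c' c).
Hypothesis c_nQp : ~~ fixes_Qp p c.
Variables (R : (algC -> algC) -> gT) (h : gT).
Hypotheses (RM : hom_on (GalK (Qp p)) R) (Rcc : R (c \o c) = (h * h)%g).
Hypothesis Rconj : forall s t, GalK (Qp p) s -> GalK (Qp p) t ->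
  (forall x, c (t x) = s (c x)) -> R t = (h^-1 * R s * h)%g.

Let c'_aut : isAut c'. Proof. exact: isAut_can cK c'K. Qed.

Let c'_nQp : fixes_Qp p c' = false.
Proof.
have : fixes_Qp p (c' \o c) by rewrite /fixes_Qp /= cK.
by rewrite fixes_QpM // (negPf c_nQp); case: (fixes_Qp p c').
Qed.

Let GalQp_fix s : isAut s -> fixes_Qp p s -> GalK (Qp p) s.
Proof. by move=> s_aut s_Qp; apply/GalQpP. Qed.

Lemma GalQp_inv_comp s : isAut s -> fixes_Qp p s = false -> GalK (Qp p) (c' \o s).
Proof.
move=> s_aut s_nQp; apply/GalQpP.
by rewrite fixes_QpM // c'_nQp s_nQp; split=> //; exact: isAut_comp.
Qed.

Let GalQp_cc : GalK (Qp p) (c \o c).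
Proof.
by apply/GalQpP; rewrite fixes_QpM // eqxx; split=> //; exact: isAut_comp.
Qed.

Let GalQp_conj s : GalK (Qp p) s -> GalK (Qp p) (c' \o s \o c).
Proof.
move=> /GalQpP[s_aut s_Qp]; have c's_aut := isAut_comp c'_aut s_aut.
apply/GalQpP; split; first exact: isAut_comp.
rewrite (fixes_QpM p_gt0 c's_aut c_aut) (fixes_QpM p_gt0 c'_aut s_aut).
by rewrite c'_nQp s_Qp (negPf c_nQp).
Qed.

Let R_conj_c s : GalK (Qp p) s -> R (c' \o s \o c) = (h^-1 * R s * h)%g.
Proof. by move=> GQps; apply: Rconj (GalQp_conj GQps) _ => // x /=; rewrite c'K. Qed.

Definition extend_hom (s : algC -> algC) : gT :=
  if fixes_Qp p s then R s else (h * R (c' \o s))%g.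

Lemma extend_homM : hom_on GQ extend_hom.
Proof.
move=> s u s_aut u_aut; rewrite /extend_hom (fixes_QpM p_gt0 s_aut u_aut).
case s_Qp: (fixes_Qp p s); case u_Qp: (fixes_Qp p u) => /=.
- exact: RM (GalQp_fix s_aut s_Qp) (GalQp_fix u_aut u_Qp).
- have Gs := GalQp_fix s_aut s_Qp; have Gu' := GalQp_inv_comp u_aut u_Qp.
  have -> : R (c' \o (s \o u)) = R ((c' \o s \o c) \o (c' \o u)).
    by apply: congr1; apply: functional_extensionality => x /=; rewrite c'K.
  by rewrite (RM (GalQp_conj Gs) Gu') (R_conj_c Gs) !mulgA mulgV mul1g.
- by rewrite (RM (GalQp_inv_comp s_aut s_Qp) (GalQp_fix u_aut u_Qp)) mulgA.
- have Gs' := GalQp_inv_comp s_aut s_Qp; have Gu' := GalQp_inv_comp u_aut u_Qp.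
  have -> : R (s \o u) = R ((c \o c) \o ((c' \o (c' \o s) \o c) \o (c' \o u))).
    by apply: congr1; apply: functional_extensionality => x /=; rewrite !c'K.
  rewrite (RM GalQp_cc (GalQp_comp p_gt0 (GalQp_conj Gs') Gu')) Rcc.
  by rewrite (RM (GalQp_conj Gs') Gu') (R_conj_c Gs') !mulgA mulgK.
Qed.

Lemma extend_hom_continuous :
  krull_continuous (GalK (Qp p)) R -> krull_continuous GQ extend_hom.
Proof.
move=> R_cont s s_aut; rewrite /extend_hom.
have Qp_agree t u : (forall x, x \in sqrtC (pstar p) :: t -> u x = s x) ->
    fixes_Qp p u = fixes_Qp p s.
  by move=> us; rewrite /fixes_Qp us ?mem_head.
case s_Qp: (fixes_Qp p s).
  have [t Rt] := R_cont s (GalQp_fix s_aut s_Qp).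
  exists (sqrtC (pstar p) :: t) => u u_aut us.
  rewrite (Qp_agree t u us) s_Qp; apply: Rt => [|x xt]; last by apply: us; rewrite inE xt orbT.
  by apply: GalQp_fix; rewrite ?(Qp_agree t u us).
have [t Rt] := R_cont _ (GalQp_inv_comp s_aut s_Qp).
exists (sqrtC (pstar p) :: t) => u u_aut us.
rewrite (Qp_agree t u us) s_Qp (Rt (c' \o u)) => [//||x xt]; last first.
  by rewrite /= us // inE xt orbT.
by apply: GalQp_inv_comp; rewrite ?(Qp_agree t u us).
Qed.

End Extension.

Definition equivariant_extension (p : nat) (F : algC -> Prop) (c : algC -> algC)
    (rho : (algC -> algC) -> PGL2 p) (g : PGL2 p) (r : (algC -> algC) -> PGL2 p) :=
  [/\ g \notin PSL2 p /\ hom_on (GalK (Qp p)) r,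
      (forall s, GalK (Qp p) s -> r s \in PSL2 p),
      (forall s, GalK F s -> r s = rho s),
      r (c \o c) = (g ^+ 2)%g
    & forall s t, GalK (Qp p) s -> GalK (Qp p) t ->
        (forall x, c (t x) = s (c x)) -> r t = (g^-1 * r s * g)%g].

Lemma equivariant_extension_dual p F c (rho rho' : (algC -> algC) -> PGL2 p) g r :
  (forall s, GalK F s -> rho' s = PGLdual (rho s)) ->
  equivariant_extension F c rho g r ->
  equivariant_extension F c rho' (PGLdual g) (fun s => PGLdual (r s)).
Proof.
move=> rho'E [[g_nPSL rM] rPSL r_rho rcc rconj]; split; first split.
- by rewrite in_PSL2 det_sq_PGLdual -in_PSL2.
- by move=> s t GQps GQpt; rewrite (rM s t GQps GQpt) PGLdualM.
- by move=> s GQps; rewrite in_PSL2 det_sq_PGLdual -in_PSL2 rPSL.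
- by move=> s GFs; rewrite (rho'E s GFs) (r_rho s GFs).
- by rewrite rcc !expg2 PGLdualM.
- move=> s t GQps GQpt ct_sc.
  by rewrite (rconj s t GQps GQpt ct_sc) !PGLdualM PGLdualV.
Qed.

Section Descent.
Variables (p : nat) (v : 'F_p) (F : algC -> Prop) (c : algC -> algC).
Variable rho : (algC -> algC) -> PGL2 p.
Hypotheses (p_pr : prime p) (p_odd : odd p) (v_neq0 : v != 0) (v_nsq : ~~ is_square v).
Hypotheses (QpF : forall x, Qp p x -> F x) (c_aut : isAut c) (c_nQp : ~~ fixes_Qp p c).
Let p_gt0 : (0 < p)%N := prime_gt0 p_pr.

Let GalF_fixes s : GalK F s -> isAut s /\ fixes_Qp p s.
Proof. by case=> s_aut sF; split=> //; apply/(fixes_QpP _ s_aut) => x /QpF /sF. Qed.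

Lemma dual_extension_of_twist :
  twist_defined_over_Q v F rho -> exists h R, equivariant_extension F c (dual rho) h R.
Proof.
case=> z [[zPSL zC _] [b _ xiE]].
pose u s := (b^-1 * (z s * Defs.eta v s) * b)%g.
have uM : hom_on GQ u.
  move=> s t s_aut t_aut.
  rewrite /u (hom_of_cocycle (eta_hom p_gt0 v_neq0) zC s_aut t_aut).
  by rewrite !mulgA mulgK.
have det_sqJp := det_sqJ p_pr p_odd.
exists (u c), u; split; first split.
- rewrite in_PSL2 det_sqJp (det_sqM p_pr p_odd) (etaE v c_aut) (negPf c_nQp).
  by rewrite (det_sq_Vbar v_neq0) -in_PSL2 (zPSL c c_aut) (negPf v_nsq).
- by move=> s t [s_aut _] [t_aut _]; apply: uM.
- move=> s /GalQpP[s_aut s_Qp].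
  by rewrite in_PSL2 det_sqJp (etaE v s_aut) s_Qp mulg1 -in_PSL2 zPSL.
- move=> s GFs; have [s_aut s_Qp] := GalF_fixes GFs.
  have := xiE s GFs; rewrite /Defs.act (etaE v s_aut) s_Qp invg1 !mulg1 mul1g => ->.
  by rewrite /u (etaE v s_aut) s_Qp mulg1.
- by rewrite (uM c c c_aut c_aut) expg2.
- move=> s t [s_aut _] [t_aut _] ct_sc.
  have uct : (u c * u t = u s * u c)%g.
    rewrite -(uM c t c_aut t_aut) -(uM s c s_aut c_aut).
    by congr u; apply: functional_extensionality.
  by rewrite -[u t](mulKg (u c)) uct mulgA.
Qed.

Lemma twist_of_dual_extension h R :
  number_field F -> krull_continuous (GalK F) rho ->
  equivariant_extension F c (dual rho) h R -> twist_defined_over_Q v F rho.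
Proof.
move=> NF rho_cont [[h_nPSL RM] RPSL R_rho Rcc Rconj].
have [c' cK c'K] : bijective c by case: c_aut.
have R_cont : krull_continuous (GalK (Qp p)) R.
  apply: krull_continuous_open_subgroup NF QpF RM _ => s GFs.
  have [t rho_t] := rho_cont s GFs.
  by exists t => u GFu ut; rewrite (R_rho u GFu) (R_rho s GFs) !dualE (rho_t u GFu ut).
pose U := extend_hom p c' R h.
exists (fun s => U s * (Defs.eta v s)^-1)%g; split; first split.
- move=> s s_aut; rewrite in_PSL2 /U /extend_hom (etaE v s_aut).
  case s_Qp: (fixes_Qp p s).
    by rewrite invg1 mulg1 -in_PSL2 RPSL //; apply/GalQpP.
  have GQpc's := GalQp_inv_comp p_gt0 c_aut cK c'K c_nQp s_aut s_Qp.
  rewrite !(det_sqM p_pr p_odd) (det_sqV p_pr p_odd) (det_sq_Vbar v_neq0) -!in_PSL2.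
  by rewrite (negPf h_nPSL) RPSL // (negPf v_nsq).
- move=> s u s_aut u_aut.
  exact (cocycle_of_hom (eta_hom p_gt0 v_neq0)
    (extend_homM p_gt0 c_aut cK c'K c_nQp RM Rcc Rconj) s_aut u_aut).
- apply: krull_continuousM; last exact: krull_continuous_map (eta_continuous v).
  exact (extend_hom_continuous p_gt0 c_aut cK c'K c_nQp h R_cont).
exists 1%g; first by rewrite in_PSL2 det_sq1.
move=> s GFs; have [s_aut s_Qp] := GalF_fixes GFs.
rewrite /Defs.act (etaE v s_aut) s_Qp /U /extend_hom s_Qp (R_rho s GFs).
by rewrite invg1 !mulg1 mul1g.
Qed.

End Descent.

Theorem proposition4 (p : nat) (v : 'F_p) (F : algC -> Prop) (c : algC -> algC)
  (rho : (algC -> algC) -> PGL2 p) :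
  prime p -> (7 <= p)%N ->
  v != 0 -> ~~ is_square v ->
  number_field F -> (forall x, Qp p x -> F x) ->
  GQ c -> (exists x, Qp p x /\ c x <> x) ->
  hom_on (GalK F) rho -> krull_continuous (GalK F) rho ->
  (forall s (z : algC) (k : nat), GalK F s -> p.-primitive_root z -> s z = z ^+ k ->
     (rho s \in PSL2 p) = is_square (k%:R : 'F_p)) ->
  (twist_defined_over_Q v F rho <->
   exists (g : PGL2 p) (r : (algC -> algC) -> PGL2 p),
     [/\ g \notin PSL2 p /\ hom_on (GalK (Qp p)) r,
         (forall s, GalK (Qp p) s -> r s \in PSL2 p),
         (forall s, GalK F s -> r s = rho s),
         r (c \o c) = (g ^+ 2)%g
       & forall s t, GalK (Qp p) s -> GalK (Qp p) t ->
           (forall x, c (t x) = s (c x)) ->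
           r t = (g^-1 * r s * g)%g]).
Proof.
move=> p_pr p_ge7 v_neq0 v_nsq NF QpF c_aut [x [Qpx cx]] _ rho_cont _.
have p_odd : odd p by case/even_prime: p_pr => // p2; rewrite p2 in p_ge7.
have c_nQp : ~~ fixes_Qp p c by apply/(fixes_QpP _ c_aut) => /(_ x Qpx).
split=> [twist | [g [r gr]]].
  have [h [R hR]] := dual_extension_of_twist p_pr p_odd v_neq0 v_nsq QpF c_aut c_nQp twist.
  exists (PGLdual h), (fun s => PGLdual (R s)).
  by apply: equivariant_extension_dual hR => s _; rewrite dualE PGLdualK.
have gr' : equivariant_extension F c (dual rho) (PGLdual g) (fun s => PGLdual (r s)).
  by apply: equivariant_extension_dual gr => s _; rewrite dualE.
exact (twist_of_dual_extension p_pr p_odd v_neq0 v_nsq QpF c_aut c_nQp NF rho_cont gr').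
Qed.
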